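(* Let $1\le p,q<\infty$, $\theta>0$, and let $p'$ satisfy $\frac1p+\frac1{p'}=1$. If $g\in l^{q)',\theta}(L^{p'})$, then the multiplication operator $M_gf=gf$ is bounded from $l^{q),\theta}(L^p)$ to $L^1(\mathbb R)$ and $\|M_g\|\le\|g\|_{p',q)',\theta}$.
   Context: Index set $\mathbb Z$, $I_k=[k,k+1)$. The space $l^{q),\theta}(L^p)$ consists of complex-valued measurable $f$ on $\mathbb R$ with $f\chi_{I_k}\in L^p$ for all $k$ and $\|f\|_{p,q),\theta}:=\sup_{\varepsilon>0}\Big(\varepsilon^{\theta}\sum_{k\in\mathbb Z}\big(\int_{I_k}|f|^p\big)^{\frac{q(1+\varepsilon)}{p}}\Big)^{\frac{1}{q(1+\varepsilon)}}<\infty$. The small Lebesgue sequence space $l^{q)',\theta}$ consists of sequences $y=\{y_k\}_{k\in\mathbb Z}$ with $$\|y\|_{l^{q)',\theta}}:=\inf\Big\{\sum_{j\in\mathbb Z}\inf_{\varepsilon>0}\varepsilon^{\frac{-\theta}{q(1+\varepsilon)}}\Big(\sum_{k\in\mathbb Z}y_{k,j}^{(q(1+\varepsilon))'}\Big)^{\frac{1}{(q(1+\varepsilon))'}}\Big\}<\infty,$$ the outer infimum over all decompositions $|y_k|=\sum_{j\in\mathbb Z}y_{k,j}$ with $y_{k,j}\ge0$, and $(q(1+\varepsilon))'$ the conjugate exponent of $q(1+\varepsilon)$. For $1\le r\le\infty$, $l^{q)',\theta}(L^{r})$ consists of measurable $g$ on $\mathbb R$ with $g\chi_{I_k}\in L^{r}$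 for all $k$ and $\|g\|_{r,q)',\theta}:=\big\|\{\|g\chi_{I_k}\|_{L^{r}}\}_{k\in\mathbb Z}\big\|_{l^{q)',\theta}}<\infty$. *)

From HB Require Import structures.
From mathcomp Require Import all_boot all_order all_algebra.
From mathcomp Require Import all_classical all_reals all_analysis.
From mathcomp Require Import complex.
Set Implicit Arguments. Unset Strict Implicit. Unset Printing Implicit Defensive.
Import Order.TTheory GRing.Theory Num.Theory.
Local Open Scope classical_set_scope.
Local Open Scope ring_scope.

Definition cabs (R : realType) (z : R[i]) : R := Normc.normc z.

Definition cmeasurable (R : realType) (f : R -> R[i]) : Prop :=
  measurable_fun setT (fun x => @complex.Re R (f x)) /\ measurable_fun setT (fun x => @complex.Im R (f x)).

Definition Ik (R : realType) (k : int) : set R := `[k%:~R, (k + 1)%:~R[%classic.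

Definition conjR (R : realType) (s : R) : R := s / (s - 1).

Definition conjE (R : realType) (p : R) : \bar R :=
  if p == 1 then +oo%E else (p / (p - 1))%:E.

Definition locint (R : realType) (p : R) (f : R -> R[i]) (k : int) : \bar R :=
  (\int[@lebesgue_measure R]_(x in @Ik R k) (cabs (f x) `^ p)%:E)%E.

Definition locLnorm (R : realType) (r : \bar R) (g : R -> R[i]) (k : int) : \bar R :=
  Lnorm (@lebesgue_measure R) r (fun x => (cabs (g x) * \1_(@Ik R k) x)%:E).

Definition grand_norm (R : realType) (p q theta : R) (f : R -> R[i]) : \bar R :=
  ereal_sup [set v : \bar R | exists2 eps : R, 0 < eps &
    v = poweR ((eps `^ theta)%:E *
                 \esum_(k in [set: int]) poweR (locint p f k) (q * (1 + eps) / p))%E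
              (q * (1 + eps))^-1].

Definition small_norm (R : realType) (q theta : R) (y : int -> R) : \bar R :=
  ereal_inf [set S : \bar R | exists yy : int -> int -> R,
    [/\ (forall k j, 0 <= yy k j),
        (forall k, (`|y k|)%:E = \esum_(j in [set: int]) (yy k j)%:E) &
        S = \esum_(j in [set: int])
              ereal_inf [set w : \bar R | exists2 eps : R, 0 < eps &
                w = ((eps `^ (- theta / (q * (1 + eps))))%:E *
                     poweR (\esum_(k in [set: int])
                              ((yy k j) `^ (conjR (q * (1 + eps))))%:E)
                           (conjR (q * (1 + eps)))^-1)%E]]].

Definition small_amalgam_norm (R : realType) (r : \bar R) (q theta : R)
    (g : R -> R[i]) : \bar R :=
  small_norm q theta (fun k => fine (locLnorm r g k)).

(* Split the integral over the unit intervals I_k and apply Hoelder's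
   inequality on each of them (with L^oo against L^1 when p = 1): this gives
   int |g f| <= sum_k a_k b_k, where a_k = ||g chi_{I_k}||_{p'} and
   b_k = ||f chi_{I_k}||_p.  For s = q(1+eps) the grand norm G of f bounds
   (sum_k b_k^s)^(1/s) by eps^(-theta/s) G.  Hence, for a decomposition
   a_k = sum_j y_kj, the discrete Hoelder inequality with exponents s' and s
   gives sum_k y_kj b_k <= eps^(-theta/s) ||y_.j||_{s'} G for every eps; take
   the infimum over eps, sum over j, and then the infimum over decompositions. *)

From HB Require Import structures.
From mathcomp Require Import all_boot all_order all_algebra.
From mathcomp Require Import all_classical all_reals all_analysis.
From mathcomp Require Import complex ess_sup_inf measurable_realfun.
Import Order.TTheory GRing.Theory Num.Theory.
Local Open Scope classical_set_scope.
Local Open Scope ring_scope.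

Definition int_of_nat (n : nat) : int := if odd n then Negz n./2 else Posz n./2.

Definition nat_of_int (k : int) : nat :=
  match k with Posz m => m.*2 | Negz m => m.*2.+1 end.

Lemma int_of_natK : cancel int_of_nat nat_of_int.
Proof. by move=> n; rewrite /int_of_nat -[RHS]odd_double_half; case: ifP. Qed.

Lemma nat_of_intK : cancel nat_of_int int_of_nat.
Proof. by case=> m; rewrite /int_of_nat /= odd_double ?doubleK ?uphalf_double. Qed.

Section extended_sums.
Context {R : realType}.
Local Open Scope ereal_scope.

Lemma le_ereal_inf_mulr (S : set (\bar R)) (x : \bar R) (c : R) :
  (0 <= c)%R -> S !=set0 -> (forall s, S s -> x <= s * c%:E) ->
  x <= ereal_inf S * c%:E.
Proof.
move=> c_ge0 [s0 Ss0] xS; have [c0|c_neq0] := eqVneq c 0%R.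
  by move: (xS _ Ss0); rewrite c0 !mule0.
rewrite muleC -ereal_inf_pZl ?lt0r ?c_neq0 //.
by apply: le_ereal_inf_tmp => _ [s Ss <-]; rewrite muleC; exact: xS.
Qed.

Lemma esum_int_series (a : int -> \bar R) : (forall k, 0 <= a k) ->
  \esum_(k in [set: int]) a k = \sum_(n <oo) a (int_of_nat n).
Proof.
move=> a0; rewrite (reindex_esum [set: nat] _ int_of_nat) ?nneseries_esumT //.
split=> // [m n _ _|k _]; first exact: (can_inj int_of_natK).
by exists (nat_of_int k); rewrite ?nat_of_intK.
Qed.

Lemma esum_intZr (a : int -> \bar R) (c : R) :
  (forall k, 0 <= a k) -> (0 <= c)%R ->
  \esum_(k in [set: int]) (a k * c%:E) = (\esum_(k in [set: int]) a k) * c%:E.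
Proof.
move=> a0 c0; have ac0 k : 0 <= a k * c%:E by rewrite mule_ge0 ?lee_fin.
rewrite !esum_int_series //.
under eq_eseriesr do rewrite muleC.
by rewrite nneseriesZl // muleC.
Qed.

Lemma esum_int_interchange (a : int -> int -> \bar R) : (forall k j, 0 <= a k j) ->
  \esum_(k in [set: int]) \esum_(j in [set: int]) a k j =
  \esum_(j in [set: int]) \esum_(k in [set: int]) a k j.
Proof.
move=> a0; rewrite !esum_int_series => [| j | k]; try exact: esum_ge0.
under eq_eseriesr do rewrite esum_int_series //.
under [RHS]eq_eseriesr do rewrite esum_int_series //.
exact: nneseries_interchange.
Qed.

Lemma hoelder_esum_int (a b : int -> R) (s t : R) :
  (forall k, 0 <= a k)%R -> (forall k, 0 <= b k)%R ->
  (0 < s)%R -> (0 < t)%R -> (s^-1 + t^-1 = 1)%R ->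
  \esum_(k in [set: int]) (a k * b k)%:E <=
  (\esum_(k in [set: int]) (a k `^ s)%:E) `^ s^-1 *
  (\esum_(k in [set: int]) (b k `^ t)%:E) `^ t^-1.
Proof.
move=> a0 b0 s0 t0 st.
rewrite !esum_int_series => [| k | k | k]; rewrite ?lee_fin ?powR_ge0 ?mulr_ge0 //.
have := @hoelder _ _ _ counting (a \o int_of_nat) (b \o int_of_nat) s t.
rewrite !Lnorm_counting //= invr1 poweRe1; last exact: nneseries_ge0.
under eq_eseriesr do rewrite powRr1 ?normr_ge0 // ger0_norm ?mulr_ge0 //.
have absK (u : int -> R) r : (forall k, 0 <= u k)%R ->
    \sum_(n <oo) (`|u (int_of_nat n)| `^ r)%:E = \sum_(n <oo) (u (int_of_nat n) `^ r)%:E.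
  by move=> u0; apply: eq_eseriesr => n _; rewrite ger0_norm.
by rewrite !absK //; apply.
Qed.

End extended_sums.

Section conjugate_exponent.
Context {R : realType}.

Lemma conjR_gt0 (s : R) : 1 < s -> 0 < conjR s.
Proof. by move=> s_gt1; rewrite divr_gt0 ?subr_gt0 // (lt_trans ltr01). Qed.

Lemma conjR_conjugate (s : R) : 1 < s -> (conjR s)^-1 + s^-1 = 1.
Proof.
move=> s_gt1; rewrite invf_div mulrBl mul1r divff ?subrK //.
by rewrite gt_eqF // (lt_trans ltr01).
Qed.

End conjugate_exponent.

Section complex_modulus.
Context {R : realType}.

Lemma cabsE (z : R[i]) : cabs z = Num.sqrt (complex.Re z ^+ 2 + complex.Im z ^+ 2).
Proof. by case: z. Qed.

Lemma cabs_ge0 (z : R[i]) : 0 <= cabs z.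
Proof. by rewrite cabsE sqrtr_ge0. Qed.

Lemma cabsM (z w : R[i]) : cabs (z * w) = cabs z * cabs w.
Proof. exact: Normc.normcM. Qed.

Lemma measurable_cabs {f : R -> R[i]} : cmeasurable f ->
  measurable_fun setT (fun x => cabs (f x)).
Proof.
move=> [mre mim]; under eq_fun do rewrite cabsE.
apply: measurableT_comp; first exact: continuous_measurable_fun (@sqrt_continuous R).
by apply: measurable_funD; apply: measurable_funX.
Qed.

Lemma cmeasurableM {f g : R -> R[i]} : cmeasurable f -> cmeasurable g ->
  cmeasurable (fun x => g x * f x).
Proof.
move=> [fre fim] [gre gim]; split.
- have -> : (fun x => complex.Re (g x * f x)) = (fun x =>
      complex.Re (g x) * complex.Re (f x) - complex.Im (g x) * complex.Im (f x)).
    by apply: funext => x; case: (g x); case: (f x).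
  by apply: measurable_funB; apply: measurable_funM.
- have -> : (fun x => complex.Im (g x * f x)) = (fun x =>
      complex.Re (g x) * complex.Im (f x) + complex.Im (g x) * complex.Re (f x)).
    by apply: funext => x; case: (g x); case: (f x).
  by apply: measurable_funD; apply: measurable_funM.
Qed.

End complex_modulus.

Section hoelder_conjugate_exponent.
Context d (T : measurableType d) (R : realType) (mu : {measure set T -> \bar R}).
Local Open Scope ereal_scope.

Lemma hoelder_infty (f g : T -> R) :
  measurable_fun setT f -> measurable_fun setT g -> 0 < mu setT ->
  'N[mu]_+oo[EFin \o f] < +oo ->
  'N[mu]_1[EFin \o (f \* g)%R] <= 'N[mu]_+oo[EFin \o f] * 'N[mu]_1[EFin \o g].
Proof.
move=> mf mg mu0 finf.
have NE : 'N[mu]_+oo[EFin \o f] = ess_sup mu (abse \o (EFin \o f)).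
  by rewrite unlock /= mu0.
set A := 'N[mu]_+oo[EFin \o f] in finf NE *.
have A0 : 0 <= A := Lnorm_ge0 _ _ _.
have AE : A = (fine A)%:E by rewrite fineK // ge0_fin_numE.
rewrite !Lnorm1 AE -ge0_integralZl_EFin //=; last first.
- exact: fine_ge0.
- exact/measurable_EFinP/measurableT_comp.
apply: ae_ge0_le_integral => //=.
- exact/measurable_EFinP/measurableT_comp/measurable_funM.
- by move=> x _; rewrite -EFinM lee_fin mulr_ge0 ?fine_ge0.
- exact/measurable_funeM/measurable_EFinP/measurableT_comp.
apply: filterS (ess_sup_ge mu (abse \o (EFin \o f))) => x.
rewrite -NE AE /= lee_fin => fxA _.
by rewrite -EFinM lee_fin normrM ler_wpM2r.
Qed.

Lemma hoelder_conjE (f g : T -> R) (p : R) : (1 <= p)%R ->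
  measurable_fun setT f -> measurable_fun setT g -> 0 < mu setT ->
  'N[mu]_(conjE p)[EFin \o f] < +oo ->
  'N[mu]_1[EFin \o (f \* g)%R] <= 'N[mu]_(conjE p)[EFin \o f] * 'N[mu]_p%:E[EFin \o g].
Proof.
rewrite /conjE; have [-> _|p_neq1 p_ge1] := eqVneq p 1%R; first exact: hoelder_infty.
move=> mf mg _ _.
have p_gt1 : (1 < p)%R by rewrite lt_neqAle eq_sym p_neq1.
apply: hoelder => //; [exact: conjR_gt0 | exact: lt_trans p_gt1 | exact: conjR_conjugate].
Qed.

End hoelder_conjugate_exponent.

Section unit_intervals.
Context {R : realType}.
Local Notation mu := (@lebesgue_measure R).

Lemma measurable_Ik (k : int) : measurable (Ik k : set R).
Proof. exact: measurable_itv. Qed.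

Lemma Ik_floor (x : R) : Ik (Num.floor x) x.
Proof.
by rewrite /Ik /= in_itv /= -floor_ge_int -floor_lt_int ltzD1 !lexx.
Qed.

Lemma Ik_inj (k l : int) (x : R) : Ik k x -> Ik l x -> k = l.
Proof.
rewrite /Ik /= !in_itv /= => /andP[kx xk1] /andP[lx xl1].
apply/eqP; rewrite eq_le -!ltzD1 -!(ltr_int R).
by rewrite (le_lt_trans kx xl1) (le_lt_trans lx xk1).
Qed.

Lemma lebesgue_measureT_gt0 : (0 < mu setT)%E.
Proof.
apply: (@lt_le_trans _ _ (mu `[0%R, 1%R])).
  by rewrite lebesgue_measure_itv /= lte_fin ltr01 /= sube0 lte01.
by apply: le_measure => //; rewrite inE //; exact: measurable_itv.
Qed.

Lemma ge0_integral_esum_Ik (F : R -> \bar R) :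
  measurable_fun setT F -> (forall x, (0 <= F x)%E) ->
  (\int[mu]_x F x = \esum_(k in [set: int]) \int[mu]_(x in Ik k) F x)%E.
Proof.
move=> mF F0; rewrite esum_int_series => [|k]; last exact: integral_ge0.
have cover : \bigcup_n Ik (int_of_nat n) = [set: R].
  apply/seteqP; split => // x _; exists (nat_of_int (Num.floor x)) => //.
  by rewrite nat_of_intK; exact: Ik_floor.
rewrite -cover ge0_integral_bigcup ?cover // => [n|m n _ _ [x [xm xn]]].
  exact: measurable_Ik.
by apply: (can_inj int_of_natK); exact: Ik_inj xm xn.
Qed.

Lemma integral_Ik_cabsM_le (p : R) (g f : R -> R[i]) (k : int) :
  1 <= p -> cmeasurable g -> cmeasurable f -> (locLnorm (conjE p) g k < +oo)%E ->
  (\int[mu]_(x in Ik k) (cabs (g x * f x))%:E <=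
    locLnorm (conjE p) g k * locint p f k `^ p^-1)%E.
Proof.
move=> p_ge1 mg mf gfin.
pose cut (h : R -> R[i]) x := cabs (h x) * \1_(Ik k) x.
have cut_ge0 h x : 0 <= cut h x by rewrite mulr_ge0 ?cabs_ge0.
have mcut h : cmeasurable h -> measurable_fun setT (cut h).
  move=> mh; apply: measurable_funM; first exact: measurable_cabs.
  by apply: measurable_indic; exact: measurable_Ik.
have -> : (\int[mu]_(x in Ik k) (cabs (g x * f x))%:E =
    'N[mu]_1[EFin \o (cut g \* cut f)%R])%E.
  rewrite Lnorm1 [LHS]integral_mkcond; apply: eq_integral => x _.
  rewrite /patch /cut /indic /= cabsM.
  by case: (x \in Ik k); rewrite ?mulr1 ?mulr0 ?normr0 // ger0_norm // mulr_ge0 ?cabs_ge0.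
have -> : (locint p f k `^ p^-1 = 'N[mu]_p%:E[EFin \o cut f])%E.
  rewrite /locint integral_mkcond unlock; congr (_ `^ _)%E.
  apply: eq_integral => x _; rewrite /patch /= ger0_norm // /cut /indic.
  by case: (x \in Ik k); rewrite ?mulr1 // mulr0 powR0 // gt_eqF // (lt_le_trans ltr01).
exact: (@hoelder_conjE _ _ _ mu _ _ p p_ge1 (mcut _ mg) (mcut _ mf) lebesgue_measureT_gt0 gfin).
Qed.

End unit_intervals.

Section grand_small_duality.
Context {R : realType}.
Variables q theta : R.
Hypothesis q_ge1 : 1 <= q.
Local Open Scope ereal_scope.

Definition grand_seq_norm (b : int -> R) : \bar R :=
  ereal_sup [set v | exists2 eps : R, (0 < eps)%R &
    v = ((eps `^ theta)%:E *
         \esum_(k in [set: int]) (b k `^ (q * (1 + eps)))%:E) `^ (q * (1 + eps))^-1].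

(* [small_norm q theta a] is the infimum, over decompositions
   [|a k| = \sum_j y k j], of [\sum_j small_gauge (y ^~ j)]. *)
Definition small_gauge (y : int -> R) : \bar R :=
  ereal_inf [set w | exists2 eps : R, (0 < eps)%R &
    w = (eps `^ (- theta / (q * (1 + eps))))%:E *
        (\esum_(k in [set: int]) (y k `^ conjR (q * (1 + eps)))%:E)
          `^ (conjR (q * (1 + eps)))^-1].

Lemma grand_seq_norm_ge0 b : 0 <= grand_seq_norm b.
Proof.
apply: (le_trans _ (ereal_sup_ubound _)); last by exists 1%R.
exact: poweR_ge0.
Qed.

Lemma esum_powR_le_grand_seq_norm (b : int -> R) (eps : R) : (0 < eps)%R ->
  grand_seq_norm b < +oo ->
  (\esum_(k in [set: int]) (b k `^ (q * (1 + eps)))%:E) `^ (q * (1 + eps))^-1 <=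
  (eps `^ (- theta / (q * (1 + eps))))%:E * grand_seq_norm b.
Proof.
move=> eps_gt0 b_fin; set s := (q * (1 + eps))%R.
have s_gt0 : (0 < s)%R by rewrite mulr_gt0 ?addr_gt0 // (lt_le_trans ltr01).
have eps_theta_gt0 : (0 < eps `^ theta)%R by exact: powR_gt0.
have : ((eps `^ theta)%:E * \esum_(k in [set: int]) (b k `^ s)%:E) `^ s^-1
    <= grand_seq_norm b by apply: ereal_sup_ubound; exists eps.
have b_fin_num : grand_seq_norm b \is a fin_num.
  by rewrite ge0_fin_numE // grand_seq_norm_ge0.
rewrite -(fineK b_fin_num); move: (fine _) => G.
have : 0 <= \esum_(k in [set: int]) (b k `^ s)%:E by apply: esum_ge0 => k _; rewrite lee_fin powR_ge0.
case: (\esum_(k in [set: int]) _) => [t t_ge0| _|//].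
- rewrite -!EFinM !poweR_EFin !lee_fin powRM ?powR_ge0 // -powRrM mulNr powRN.
  by rewrite ler_pdivlMl // powR_gt0.
- by rewrite gt0_muley ?lte_fin // poweRyr // invr_eq0 gt_eqF.
Qed.

Lemma small_gauge_ge0 y : 0 <= small_gauge y.
Proof.
apply: le_ereal_inf_tmp => _ [eps _ ->].
by rewrite mule_ge0 ?lee_fin ?powR_ge0 ?poweR_ge0.
Qed.

Lemma small_norm_ge0 a : 0 <= small_norm q theta a.
Proof.
apply: le_ereal_inf_tmp => _ [y [_ _ ->]].
by apply: esum_ge0 => j _; exact: small_gauge_ge0.
Qed.

Lemma esum_mul_le_small_gauge (y b : int -> R) :
  (forall k, 0 <= y k)%R -> (forall k, 0 <= b k)%R -> grand_seq_norm b < +oo ->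
  \esum_(k in [set: int]) (y k * b k)%:E <= small_gauge y * grand_seq_norm b.
Proof.
move=> y_ge0 b_ge0 b_fin.
have b_fin_num : grand_seq_norm b \is a fin_num.
  by rewrite ge0_fin_numE // grand_seq_norm_ge0.
rewrite -(fineK b_fin_num); apply: le_ereal_inf_mulr; first exact/fine_ge0/grand_seq_norm_ge0.
  by eexists; exists 1%R.
move=> _ [eps eps_gt0 ->]; set s := (q * (1 + eps))%R.
have s_gt1 : (1 < s)%R.
  apply: (@lt_le_trans _ _ (1 + eps)%R); first by rewrite ltrDl.
  by rewrite /s ler_peMl // addr_ge0 // ltW.
have s_gt0 : (0 < s)%R := lt_trans ltr01 s_gt1.
apply: le_trans (hoelder_esum_int _ _ _ _ y_ge0 b_ge0 (conjR_gt0 _ s_gt1) s_gt0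
  (conjR_conjugate _ s_gt1)) _.
rewrite fineK // (muleC (_%:E)) -muleA; apply: lee_wpmul2l; first exact: poweR_ge0.
exact: esum_powR_le_grand_seq_norm.
Qed.

Lemma esum_mul_le_small_grand (a b : int -> R) :
  (forall k, 0 <= a k)%R -> (forall k, 0 <= b k)%R -> grand_seq_norm b < +oo ->
  \esum_(k in [set: int]) (a k * b k)%:E <= small_norm q theta a * grand_seq_norm b.
Proof.
move=> a_ge0 b_ge0 b_fin.
have b_fin_num : grand_seq_norm b \is a fin_num.
  by rewrite ge0_fin_numE // grand_seq_norm_ge0.
rewrite -[in X in _ <= _ * X](fineK b_fin_num).
apply: le_ereal_inf_mulr; first exact/fine_ge0/grand_seq_norm_ge0.
  eexists; exists (fun k j => if j \in [set 0%Z] then `|a k| else 0)%R; split => //.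
    by move=> k j; case: ifP.
  move=> k; rewrite -(@esum_set1 _ _ 0%Z (fun=> `|a k|%:E)) ?lee_fin // esum_mkcond.
  by apply: eq_esum => j _; rewrite (fun_if EFin).
move=> _ [y [y_ge0 ay ->]].
have -> : \esum_(k in [set: int]) (a k * b k)%:E =
    \esum_(j in [set: int]) \esum_(k in [set: int]) (y k j * b k)%:E.
  rewrite -esum_int_interchange => [|k j]; last by rewrite lee_fin mulr_ge0.
  apply: eq_esum => k _; under eq_esum do rewrite EFinM.
  rewrite esum_intZr //; last by move=> j; rewrite lee_fin.
  by rewrite -ay ger0_norm // EFinM.
rewrite -esum_intZr ?fine_ge0 ?grand_seq_norm_ge0 //; last first.
  by move=> j; exact: small_gauge_ge0.
apply: le_esum => j _; rewrite fineK //.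
exact: esum_mul_le_small_gauge.
Qed.

End grand_small_duality.

Section amalgam_norms.
Context {R : realType}.
Local Notation mu := (@lebesgue_measure R).
Local Open Scope ereal_scope.

Lemma locint_ge0 (p : R) (f : R -> R[i]) (k : int) : 0 <= locint p f k.
Proof. by apply: integral_ge0 => x _; rewrite lee_fin powR_ge0. Qed.

Lemma locLnorm_ge0 (r : \bar R) (g : R -> R[i]) (k : int) : 0 <= locLnorm r g k.
Proof. exact: Lnorm_ge0. Qed.

Lemma grand_normE (p q theta : R) (f : R -> R[i]) : (0 < p)%R ->
  (forall k, locint p f k < +oo) ->
  grand_norm p q theta f =
  grand_seq_norm q theta (fun k => fine (locint p f k) `^ p^-1)%R.
Proof.
move=> p_gt0 f_fin.
have E (r : R) : \esum_(k in [set: int]) poweR (locint p f k) (r / p) =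
    \esum_(k in [set: int]) ((fine (locint p f k) `^ p^-1) `^ r)%:E.
  apply: eq_esum => k _; rewrite -powRrM mulrC -poweR_EFin fineK //.
  by rewrite ge0_fin_numE ?locint_ge0.
rewrite /grand_norm /grand_seq_norm; congr ereal_sup.
by apply/seteqP; split => _ [eps eps_gt0 ->]; exists eps; rewrite ?E.
Qed.

Lemma integral_cabsM_le_esum (p : R) (g f : R -> R[i]) : (1 <= p)%R ->
  cmeasurable g -> cmeasurable f ->
  (forall k, locLnorm (conjE p) g k < +oo) -> (forall k, locint p f k < +oo) ->
  \int[mu]_x (cabs (g x * f x))%:E <=
  \esum_(k in [set: int])
    (fine (locLnorm (conjE p) g k) * fine (locint p f k) `^ p^-1)%:E.
Proof.
move=> p_ge1 mg mf g_fin f_fin.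
rewrite ge0_integral_esum_Ik => [||x]; last by rewrite lee_fin cabs_ge0.
- apply: le_esum => k _; rewrite EFinM -poweR_EFin !fineK ?ge0_fin_numE ?locint_ge0 ?locLnorm_ge0 //.
  exact: integral_Ik_cabsM_le.
- by apply/measurable_EFinP; exact: measurable_cabs (cmeasurableM mf mg).
Qed.

End amalgam_norms.

Theorem theorem4p2 (R : realType) (p q theta : R)
  (hp : 1 <= p) (hq : 1 <= q) (htheta : 0 < theta) (g : R -> R[i])
  (hgm : cmeasurable g)
  (hgloc : forall k : int, (locLnorm (conjE p) g k < +oo)%E)
  (hgn : (small_amalgam_norm (conjE p) q theta g < +oo)%E) :
  forall f : R -> R[i],
    cmeasurable f ->
    (forall k : int, (locint p f k < +oo)%E) ->
    (grand_norm p q theta f < +oo)%E ->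
    [/\ cmeasurable (fun x => g x * f x),
        (@lebesgue_measure R).-integrable setT (fun x => (cabs (g x * f x))%:E) &
        (\int[@lebesgue_measure R]_x (cabs (g x * f x))%:E
           <= small_amalgam_norm (conjE p) q theta g * grand_norm p q theta f)%E].
Proof.
move=> f hfm hfloc hfn.
have p_gt0 : 0 < p := lt_le_trans ltr01 hp.
have hgfm := cmeasurableM hfm hgm.
rewrite grand_normE // in hfn *.
have bound : (\int[@lebesgue_measure R]_x (cabs (g x * f x))%:E <=
    small_amalgam_norm (conjE p) q theta g *
    grand_seq_norm q theta (fun k => fine (locint p f k) `^ p^-1)%R)%E.
  apply: le_trans (integral_cabsM_le_esum _ _ _ hp hgm hfm hgloc hfloc) _.
  apply: esum_mul_le_small_grand => // k; [exact/fine_ge0/locLnorm_ge0 | exact: powR_ge0].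
split => //; apply/integrableP; split.
  by apply/measurable_EFinP; exact: measurable_cabs hgfm.
under eq_integral do rewrite gee0_abs ?lee_fin ?cabs_ge0 //.
apply: le_lt_trans bound _; apply: lte_mul_pinfty => //; first exact: small_norm_ge0.
by rewrite ge0_fin_numE // small_norm_ge0.
Qed.
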